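(* Let $\Gamma$ and $\Gamma'$ be two paths in $B(\mathfrak S_n)$ belonging to the same flipclass. Then: the groups $W(\Gamma)$ and $W(\Gamma')$ coincide; the vertex sets of $G(\Gamma)$ and $G(\Gamma')$ coincide; and $G(\Gamma)$ and $G(\Gamma')$ have the same number of connected components.
   Context: $\mathfrak S_n$ is the symmetric group on $[n]$, $T$ its transpositions, $\ell$ the length w.r.t. simple transpositions. The Bruhat graph $B(\mathfrak S_n)$ has an edge $x\xrightarrow{t}y$ iff $yx^{-1}=t\in T$ and $\ell(x)<\ell(y)$; $P_h(u,v)$ is the set of paths $u=x_0\to\cdots\to x_h=v$ of length $h$. Between two fixed vertices there are $0$ or $2$ paths of length $2$, each the flip of the other; the $i$-th flip operator $f_i$ ($i\in[h-1]$) on $P_h(u,v)$ replaces $x_{i-1}\to x_i\to x_{i+1}$ by its flip; flipclasses are the orbits of $\langle f_1,\dots,f_{h-1}\rangle$ on $P_h(u,v)$. For a path $\Gamma=(x_0\xrightarrow{t_1}x_1\xrightarrow{t_2}\cdots\xrightarrow{t_h}x_h)$, $W(\Gamma)$ is the subgroup of $\mathfrak S_n$ generated by $t_1,\dots,t_h$, and $G(\Gamma)$ is the edge-labelled undirected multigraph with vertex set $\{a\in[n]: t_i(a)\ne a\text{ for some }i\in[h]\}$ and an edge labelled $i$ between $a$ and $b$ whenever $t_i=(a,b)$. *)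

From mathcomp Require Import all_boot all_fingroup.
Set Implicit Arguments. Unset Strict Implicit. Unset Printing Implicit Defensive.
Local Open Scope group_scope.

(* S_n is {perm 'I_n}.  Mathcomp's product is left-to-right:
   (x * y) a = y (x a); hence the permutation y o x^{-1} of the paper
   is written x^-1 * y here. *)

(* Coxeter length w.r.t. simple transpositions = number of inversions. *)
Definition inv_count n (s : {perm 'I_n}) : nat :=
  #|[set ij : 'I_n * 'I_n | (ij.1 < ij.2)%N && (s ij.2 < s ij.1)%N]|.

Definition is_transp n (t : {perm 'I_n}) : bool :=
  [exists a : 'I_n, exists b : 'I_n, (a != b) && (t == tperm a b)].

Definition bruhat_edge n : rel {perm 'I_n} :=
  fun x y => is_transp (x^-1 * y) && (inv_count x < inv_count y)%N.

Definition is_bpath n h (u v : {perm 'I_n}) (p : h.+1.-tuple {perm 'I_n}) : bool :=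
  [&& tnth p ord0 == u, tnth p ord_max == v &
      [forall i : 'I_h, bruhat_edge (tnth p (widen_ord (leqnSn h) i))
                                    (tnth p (lift ord0 i))]].

(* label t_{i+1} = x_{i+1} x_i^{-1}, for i : 'I_h (0-based) *)
Definition lab n h (p : h.+1.-tuple {perm 'I_n}) (i : 'I_h) : {perm 'I_n} :=
  (tnth p (widen_ord (leqnSn h) i))^-1 * tnth p (lift ord0 i).

(* One flip move inside P_h(u,v): replace an interior vertex x_i (0<i<h)
   by the other middle vertex of a length-2 path x_{i-1} -> . -> x_{i+1}. *)
Definition flip_step n h (u v : {perm 'I_n}) : rel (h.+1.-tuple {perm 'I_n}) :=
  fun p q =>
    [&& is_bpath u v p, is_bpath u v q &
        [exists i : 'I_h.+1,
          [&& (0 < i)%N, (i < h)%N, tnth p i != tnth q i &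
              [forall j : 'I_h.+1, (j != i) ==> (tnth p j == tnth q j)]]]].

(* Same flipclass: q is in the orbit of p under <f_1,...,f_{h-1}>. *)
Definition same_flipclass n h (u v : {perm 'I_n}) (p q : h.+1.-tuple {perm 'I_n}) : bool :=
  connect (flip_step u v) p q.

Definition Wgrp n h (p : h.+1.-tuple {perm 'I_n}) : {set {perm 'I_n}} :=
  <<[set lab p i | i : 'I_h]>>.

Definition Gverts n h (p : h.+1.-tuple {perm 'I_n}) : {set 'I_n} :=
  [set a : 'I_n | [exists i : 'I_h, lab p i a != a]].

Definition Gadj n h (p : h.+1.-tuple {perm 'I_n}) : rel 'I_n :=
  fun a b => (a != b) && [exists i : 'I_h, lab p i == tperm a b].

Definition Gncomp n h (p : h.+1.-tuple {perm 'I_n}) : nat :=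
  #|[set [set b in Gverts p | connect (Gadj p) a b] | a in Gverts p]|.

(* A flip replaces two consecutive labels t_i, t_{i+1} of a Bruhat path by
   two transpositions t'_i, t'_{i+1} with t'_i t'_{i+1} = t_i t_{i+1} =: w,
   and w <> 1 because lengths strictly increase along the path, so that
   t'_i <> t'_{i+1}.  A transposition (a b) <> t with (a b) t = w satisfies
   w a = b or w b = a, hence t'_i = (x, w x) for some point x, and likewise
   t'_{i+1} = (y, w^-1 y).  Now (x, w x) lies in every group containing
   t_i and t_{i+1} (it is one of them or a conjugate of one by the other),
   and x is joined to w x in G(Gamma) through the two edges of t_i and
   t_{i+1}.  So each new label lies in W(Gamma) and joins two vertices that
   are connected in G(Gamma); by symmetry of the flip, the group W and the
   connectivity relation of G are flip invariants, and they determine the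
   vertex set and the number of components of G. *)

From mathcomp Require Import all_boot all_fingroup.
Set Implicit Arguments. Unset Strict Implicit. Unset Printing Implicit Defensive.
Local Open Scope group_scope.

Lemma connect_fun_eq (T : finType) (rT : eqType) (e : rel T) (f : T -> rT) :
  (forall x y, e x y -> f x = f y) -> forall x y, connect e x y -> f x = f y.
Proof.
move=> fe x y xy; apply/eqP; rewrite eq_sym.
have cl : closed e [pred z | f z == f x].
  by move=> z z' /fe; rewrite !inE => ->.
by rewrite -[_ == _](closed_connect cl xy) !inE.
Qed.

Section Transpositions.

Variable T : finType.
Implicit Types (a b c d x : T) (s t : {perm T}).

Definition transposition t := exists c d, c != d /\ t = tperm c d.

Lemma tperm_moved c d x : tperm c d x != x -> tperm c d = tperm x (tperm c d x).
Proof.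
case: tpermP => [->|->|]; [by [] | by rewrite tpermC | by rewrite eqxx].
Qed.

Lemma transposition_moved t x : transposition t -> t x != x -> t = tperm x (t x).
Proof. by case=> c [d [_ ->]]; apply: tperm_moved. Qed.

Lemma transposition_invg t : transposition t -> t^-1 = t.
Proof. by case=> c [d [_ ->]]; rewrite tpermV. Qed.

Lemma transposition_mulgg t : transposition t -> t * t = 1.
Proof. by case=> c [d [_ ->]]; rewrite tperm2. Qed.

Lemma tperm_mul_endpoint a b t : transposition t -> a != b -> tperm a b != t ->
  (tperm a b * t) a = b \/ (tperm a b * t) b = a.
Proof.
move=> tr_t ab tab; rewrite !permM tpermL tpermR.
have [tb | tb] := eqVneq (t b) b; [by left | right].
have t_def := transposition_moved tr_t tb.
have [a_tb | a_tb] := eqVneq a (t b).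
  by move: tab; rewrite t_def -a_tb tpermC eqxx.
by rewrite t_def tpermD // eq_sym.
Qed.

Lemma transposition_prodE t s : transposition t -> transposition s -> t != s ->
  exists x, t = tperm x ((t * s) x).
Proof.
case=> a [b [ab ->]] tr_s tab.
have [wa | wb] := tperm_mul_endpoint tr_s ab tab.
  by exists a; rewrite wa.
by exists b; rewrite wb tpermC.
Qed.

Variables (G : {group {perm T}}) (e : rel T).
Hypothesis e_sym : connect_sym e.

Definition spanned t := (t \in G) && [forall a, connect e a (t a)].

Lemma mem_tperm_prod s1 s2 x : transposition s1 -> transposition s2 ->
  s1 \in G -> s2 \in G -> tperm x ((s1 * s2) x) \in G.
Proof.
move=> tr1 tr2 G1 G2; rewrite permM.
have [s1x | s1x] := eqVneq (s1 x) x.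
  rewrite s1x; have [s2x | s2x] := eqVneq (s2 x) x.
    by rewrite s2x tperm1 group1.
  by rewrite -(transposition_moved tr2 s2x).
have s1_def := transposition_moved tr1 s1x.
move: (s1 x) s1_def s1x => y s1_def yx.
have [s2y | s2y] := eqVneq (s2 y) y; first by rewrite s2y -s1_def.
have s2_def := transposition_moved tr2 s2y.
move: (s2 y) s2_def s2y => z s2_def zy.
have [-> | zx] := eqVneq z x; first by rewrite tperm1 group1.
(* (x z) is the conjugate of s2 = (y z) by s1 = (x y) *)
have : s2 ^ s1 \in G by rewrite groupJ.
by rewrite s2_def s1_def [tperm x y]tpermC tpermJ_tperm // eq_sym.
Qed.

Lemma connect_tperm_prod s1 s2 x :
  (forall a, connect e a (s1 a)) -> (forall a, connect e a (s2 a)) ->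
  forall a, connect e a (tperm x ((s1 * s2) x) a).
Proof.
move=> c1 c2; have cx : connect e x ((s1 * s2) x).
  by rewrite permM (connect_trans (c1 x) (c2 _)).
by move=> a; case: tpermP => [-> | -> |] //; rewrite e_sym.
Qed.

Lemma spanned_tperm_prod s1 s2 x : transposition s1 -> transposition s2 ->
  spanned s1 -> spanned s2 -> spanned (tperm x ((s1 * s2) x)).
Proof.
move=> tr1 tr2 /andP [G1 /forallP c1] /andP [G2 /forallP c2].
apply/andP; split; first exact: mem_tperm_prod.
by apply/forallP; apply: connect_tperm_prod.
Qed.

Lemma transposition_invMg s t : transposition s -> transposition t ->
  (s * t)^-1 = t * s.
Proof. by move=> tr_s tr_t; rewrite invMg !transposition_invg. Qed.

Lemma spanned_flip s1 s2 t1 t2 :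
  transposition s1 -> transposition s2 -> transposition t1 -> transposition t2 ->
  s1 * s2 = t1 * t2 -> t1 != t2 -> spanned s1 -> spanned s2 ->
  spanned t1 /\ spanned t2.
Proof.
move=> tr1 tr2 tr1' tr2' prod12 t12 sp1 sp2.
have prod21 : s2 * s1 = t2 * t1.
  by rewrite -transposition_invMg // prod12 transposition_invMg.
have [x t1_def] := transposition_prodE tr1' tr2' t12.
have [y t2_def] := transposition_prodE tr2' tr1' (contra_neq esym t12).
split; [rewrite t1_def -prod12 | rewrite t2_def -prod21];
  exact: spanned_tperm_prod.
Qed.

End Transpositions.

Lemma is_transpP n (t : {perm 'I_n}) : reflect (transposition t) (is_transp t).
Proof.
apply: (iffP existsP) => [[c /existsP [d /andP [cd /eqP ->]]] | [c [d [cd ->]]]].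
  by exists c, d.
by exists c; apply/existsP; exists d; rewrite cd eqxx.
Qed.

Section BruhatPaths.

Variables n h : nat.
Implicit Types (u v : {perm 'I_n}) (p q : h.+1.-tuple {perm 'I_n}).

Lemma labE p (k : 'I_h) : lab p k = (nth 1 p k)^-1 * nth 1 p k.+1.
Proof. by rewrite /lab !(tnth_nth 1) /= /bump leq0n add1n. Qed.

Lemma bpath_lab_transposition u v p k : is_bpath u v p -> transposition (lab p k).
Proof. by case/and3P=> _ _ /forallP /(_ k) /andP [/is_transpP]. Qed.

Lemma bpath_inv_count_lt u v p k : is_bpath u v p -> k < h ->
  inv_count (nth 1 p k) < inv_count (nth 1 p k.+1).
Proof.
case/and3P=> _ _ /forallP bp hk; case/andP: (bp (Ordinal hk)) => _.
by rewrite !(tnth_nth 1) /= /bump leq0n add1n.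
Qed.

Lemma flip_stepC u v p q : flip_step u v p q -> flip_step u v q p.
Proof.
case/and3P=> bp bq /existsP [i /and4P [i0 ih pq_i /forallP pq_j]].
apply/and3P; split=> //; apply/existsP; exists i.
rewrite i0 ih eq_sym pq_i; apply/forallP=> j; rewrite [tnth q j == _]eq_sym.
exact: pq_j.
Qed.

Lemma flip_step_labs u v p q : flip_step u v p q ->
  exists k1 k2 : 'I_h, [/\ lab p k1 * lab p k2 = lab q k1 * lab q k2,
    lab q k1 != lab q k2 & forall k, k != k1 -> k != k2 -> lab q k = lab p k].
Proof.
case/and3P=> _ bq /existsP [i /and4P [i0 ih _ /forallP pq_j]].
have nth_pq (j : nat) : j != i -> nth 1 p j = nth 1 q j.
  move=> ji; have [hj | hj] := ltnP j h.+1; last by rewrite !nth_default ?size_tuple.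
  have /implyP := pq_j (Ordinal hj); rewrite !(tnth_nth 1) -val_eqE => pq.
  exact/eqP/pq.
have ih' : i.-1 < h by rewrite (leq_ltn_trans (leq_pred i) ih).
have iS : i.-1.+1 = i by rewrite prednK.
exists (Ordinal ih'), (Ordinal ih).
have labM (r : h.+1.-tuple {perm 'I_n}) : lab r (Ordinal ih') * lab r (Ordinal ih) = (nth 1 r i.-1)^-1 * nth 1 r i.+1.
  by rewrite !labE /= iS !mulgA mulgK.
split.
- rewrite !labM !nth_pq // ?neq_ltn ?ltnSn ?orbT //.
  by rewrite -[X in _ < X]iS ltnSn.
- apply/eqP => lab_eq.
  have : (nth 1 q i.-1)^-1 * nth 1 q i.+1 = 1.
    by rewrite -labM lab_eq transposition_mulgg //; apply: bpath_lab_transposition bq.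
  move/eqP; rewrite -eq_mulVg1 => /eqP q_eq.
  suff : inv_count (nth 1 q i.-1) < inv_count (nth 1 q i.+1) by rewrite q_eq ltnn.
  apply: ltn_trans (bpath_inv_count_lt bq ih') _.
  by rewrite iS; apply: bpath_inv_count_lt bq ih.
- move=> k kk1 kk2; rewrite !labE !nth_pq //.
  by apply: contra_neq kk1 => ki; apply: val_inj; rewrite /= -ki.
Qed.

Lemma Gadj_sym p : symmetric (Gadj p).
Proof. by move=> a b; rewrite /Gadj eq_sym tpermC. Qed.

Notation spanned_by p := (spanned [group of Wgrp p] (Gadj p)).

Lemma bpath_lab_spanned u v p k : is_bpath u v p -> spanned_by p (lab p k).
Proof.
move=> bp; apply/andP; split; first by rewrite mem_gen ?imset_f.
apply/forallP=> a; have [-> // | moved] := eqVneq (lab p k a) a.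
apply: connect1; rewrite /Gadj eq_sym moved; apply/existsP; exists k.
by rewrite -(transposition_moved (bpath_lab_transposition k bp) moved).
Qed.

Lemma flip_step_spanned u v p q : flip_step u v p q ->
  forall k, spanned_by p (lab q k).
Proof.
move=> pq; have /and3P [bp bq _] := pq.
have [k1 [k2 [prod_eq neq12 lab_eq]]] := flip_step_labs pq.
have spanned_k1k2 := spanned_flip (sym_connect_sym (Gadj_sym p))
  (bpath_lab_transposition k1 bp) (bpath_lab_transposition k2 bp)
  (bpath_lab_transposition k1 bq) (bpath_lab_transposition k2 bq) prod_eq neq12
  (bpath_lab_spanned k1 bp) (bpath_lab_spanned k2 bp).
move=> k; have [-> | kk1] := eqVneq k k1; first by case: spanned_k1k2.
have [-> | kk2] := eqVneq k k2; first by case: spanned_k1k2.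
by rewrite lab_eq //; apply: bpath_lab_spanned bp.
Qed.

Lemma spanned_labs_sub p q : (forall k, spanned_by p (lab q k)) ->
  Wgrp q \subset Wgrp p /\ forall a b, connect (Gadj q) a b -> connect (Gadj p) a b.
Proof.
move=> sp; split.
  by rewrite gen_subG; apply/subsetP=> _ /imsetP [k _ ->]; case/andP: (sp k).
apply: connect_sub => a b /andP [_ /existsP [k /eqP lab_ab]].
by case/andP: (sp k) => _ /forallP /(_ a); rewrite lab_ab tpermL.
Qed.

Lemma flip_step_eq u v p q : flip_step u v p q ->
  Wgrp p = Wgrp q /\ connect (Gadj p) =2 connect (Gadj q).
Proof.
move=> pq; have [subW_qp sub_qp] := spanned_labs_sub (flip_step_spanned pq).
have [subW_pq sub_pq] := spanned_labs_sub (flip_step_spanned (flip_stepC pq)).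
split; first by apply/eqP; rewrite eqEsubset subW_pq subW_qp.
by move=> a b; apply/idP/idP; [apply: sub_pq | apply: sub_qp].
Qed.

Lemma Gverts_connect u v p : is_bpath u v p ->
  Gverts p = [set a | [exists b, (b != a) && connect (Gadj p) a b]].
Proof.
move=> bp; apply/setP=> a; rewrite !inE; apply/existsP/existsP.
  case=> k moved; exists (lab p k a); rewrite moved.
  by case/andP: (bpath_lab_spanned k bp) => _ /forallP ->.
case=> b /andP [ba /connectP [[|c s] /= path_ab b_def]].
  by rewrite b_def eqxx in ba.
case/andP: path_ab => /andP [ac /existsP [k /eqP lab_ac]] _.
by exists k; rewrite lab_ac tpermL eq_sym.
Qed.

Lemma eq_Gncomp p q : Gverts p = Gverts q ->
  connect (Gadj p) =2 connect (Gadj q) -> Gncomp p = Gncomp q.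
Proof.
move=> V_eq C_eq; rewrite /Gncomp V_eq.
by under eq_imset => a do under eq_finset => b do rewrite C_eq.
Qed.

Lemma flip_step_invariants u v p q : flip_step u v p q ->
  [/\ Wgrp p = Wgrp q, Gverts p = Gverts q & Gncomp p = Gncomp q].
Proof.
move=> pq; have /and3P [bp bq _] := pq; have [W_eq C_eq] := flip_step_eq pq.
have V_eq : Gverts p = Gverts q.
  by rewrite (Gverts_connect bp) (Gverts_connect bq); apply/setP=> a;
    rewrite !inE; apply: eq_existsb => b; rewrite C_eq.
by split; last exact: eq_Gncomp.
Qed.

End BruhatPaths.

Theorem lemma6p1 (n h : nat) (u v : {perm 'I_n})
    (p q : h.+1.-tuple {perm 'I_n}) :
  is_bpath u v p -> same_flipclass u v p q ->
  [/\ Wgrp p = Wgrp q, Gverts p = Gverts q & Gncomp p = Gncomp q].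
Proof.
move=> _ pq.
have invariant (rT : eqType) (f : h.+1.-tuple {perm 'I_n} -> rT) :
    (forall p' q', flip_step u v p' q' -> f p' = f q') -> f p = f q.
  by move=> f_inv; apply: connect_fun_eq f_inv _ _ pq.
by split; apply: invariant => p' q' /flip_step_invariants [].
Qed.
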